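(* Let $0<m\le n$ and let $S\subset\Delta^n$ be the union of $m$ of the codimension-one faces of the $n$-simplex $\Delta^n$. Then the inclusion $S\hookrightarrow\Delta^n$ is an $m$-expansion.
   Context: $\Lambda^p_i=\bigcup_{j\ne i}\partial_j\Delta^p$ is the horn. For $m>0$, an inclusion of simplicial sets $S\hookrightarrow T$ is an $m$-expansion if there is a filtration $S=F_{-1}T\subset F_0T\subset F_1T\subset\cdots$ with $T=\bigcup_\ell F_\ell T$, a weakly monotone sequence $n_\ell\ge m$ ($\ell\ge0$), indices $0\le i_\ell\le n_\ell$, and maps $x_\ell:\Delta^{n_\ell}\to F_\ell T$, $y_\ell:\Lambda^{n_\ell}_{i_\ell}\to F_{\ell-1}T$ making $F_\ell T$ the pushout of $F_{\ell-1}T\leftarrow\Lambda^{n_\ell}_{i_\ell}\hookrightarrow\Delta^{n_\ell}$. *)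

(* simplicial sets defined from scratch as presheaves on the
   simplex category Delta, whose objects are [k] = {0,...,k} ('I_k.+1) and whose
   morphisms are weakly monotone maps. *)
From Stdlib Require Import ProofIrrelevance.
From mathcomp Require Import all_boot.

Set Implicit Arguments.
Unset Strict Implicit.
Unset Printing Implicit Defensive.

Definition monob k l (f : {ffun 'I_k.+1 -> 'I_l.+1}) : bool :=
  [forall i : 'I_k.+1, forall j : 'I_k.+1, (i <= j) ==> (f i <= f j)].

Definition Dmor (k l : nat) := {f : {ffun 'I_k.+1 -> 'I_l.+1} | monob f}.

Lemma monobP k l (f : {ffun 'I_k.+1 -> 'I_l.+1}) :
  monob f -> forall i j : 'I_k.+1, i <= j -> f i <= f j.
Proof.
move=> /forallP H i j hij; have /forallP Hi := H i.
by have /implyP := Hi j; apply.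
Qed.

Lemma Did_mono k : monob [ffun i : 'I_k.+1 => i].
Proof.
by apply/forallP => i; apply/forallP => j; apply/implyP; rewrite !ffunE.
Qed.

Definition Did k : Dmor k k := exist (@monob k k) _ (Did_mono k).

Lemma Dcomp_mono k l p (f : Dmor k l) (g : Dmor l p) :
  monob [ffun i => sval g (sval f i)].
Proof.
apply/forallP => i; apply/forallP => j; apply/implyP => hij; rewrite !ffunE.
by apply: (monobP (svalP g)); apply: (monobP (svalP f)).
Qed.

(* first f, then g *)
Definition Dcomp k l p (f : Dmor k l) (g : Dmor l p) : Dmor k p :=
  exist (@monob k p) _ (Dcomp_mono f g).

Lemma Dcomp_id_l k p (g : Dmor k p) : Dcomp (Did k) g = g.
Proof.
apply: val_inj; apply/ffunP => i; by rewrite /= !ffunE.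
Qed.

Lemma Dcomp_assoc k l p q (f : Dmor k l) (g : Dmor l p) (h : Dmor p q) :
  Dcomp (Dcomp f g) h = Dcomp f (Dcomp g h).
Proof.
apply: val_inj; apply/ffunP => i; by rewrite /= !ffunE.
Qed.

Record sSet := SSet {
  ob :> nat -> Type;
  act : forall k l, Dmor k l -> ob l -> ob k;
  act_id : forall k x, act (Did k) x = x;
  act_comp : forall k l p (f : Dmor k l) (g : Dmor l p) x,
      act (Dcomp f g) x = act f (act g x)
}.

Record sMap (X Y : sSet) := SMap {
  smap :> forall k, X k -> Y k;
  smap_nat : forall k l (f : Dmor k l) x, smap (act f x) = act f (smap x)
}.

Definition Delta (p : nat) : sSet :=
  @SSet (fun k => Dmor k p) (fun k l f g => Dcomp f g)
        (fun k g => Dcomp_id_l g) (fun k l q f g h => Dcomp_assoc f g h).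

Record subcx (X : sSet) := Subcx {
  smem :> forall k, X k -> Prop;
  smem_act : forall k l (f : Dmor k l) x, smem x -> smem (act f x)
}.

Section Sub.
Variables (X : sSet) (A : subcx X).

Definition sub_ob k := {x : X k | A k x}.
Definition sub_act k l (f : Dmor k l) (x : sub_ob l) : sub_ob k :=
  exist _ (act f (proj1_sig x)) (smem_act f (proj2_sig x)).

Lemma sub_act_id k (x : sub_ob k) : sub_act (Did k) x = x.
Proof. case: x => x px; apply: eq_sig_hprop => /=; [move=> ? ? ?; exact: proof_irrelevance|exact: act_id]. Qed.

Lemma sub_act_comp k l p (f : Dmor k l) (g : Dmor l p) x :
  sub_act (Dcomp f g) x = sub_act f (sub_act g x).
Proof. case: x => x px; apply: eq_sig_hprop => /=; [move=> ? ? ?; exact: proof_irrelevance|exact: act_comp]. Qed.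

Definition sub : sSet := SSet sub_act_id sub_act_comp.

Definition incl : sMap sub X := @SMap sub X (fun k x => proj1_sig x) (fun _ _ _ _ => erefl).
End Sub.

Definition incl_sub (X : sSet) (A B : subcx X) (H : forall k x, A k x -> B k x) :
  sMap (sub A) (sub B).
Proof.
refine (@SMap (sub A) (sub B) (fun k x => exist _ (proj1_sig x) (H k _ (proj2_sig x))) _).
move=> k l f [x px]; apply: eq_sig_hprop => //= ? ? ?; exact: proof_irrelevance.
Defined.

(* a k-simplex f of Delta^p lies in the face d_j Delta^p iff vertex j is not in its image *)
Definition in_face p (j : 'I_p.+1) k (f : Dmor k p) : Prop := forall v, sval f v != j.

Definition union_faces (p : nat) (J : pred 'I_p.+1) : subcx (Delta p).
Proof.
refine (@Subcx (Delta p) (fun k f => exists j, J j /\ in_face j f) _).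
move=> k l f g [j [Jj Hj]]; exists j; split => // v /=; rewrite ffunE; exact: Hj.
Defined.

Definition horn (p : nat) (i : 'I_p.+1) : subcx (Delta p) := union_faces (predC1 i).

(* The commutative square   A --g--> B
                            |h       |b
                            v        v
                            C --c--> D     is a pushout in sSet. *)
Definition is_pushout (A B C D : sSet) (g : sMap A B) (h : sMap A C)
    (b : sMap B D) (c : sMap C D) : Prop :=
  (forall k (a : A k), b k (g k a) = c k (h k a)) /\
  forall (Z : sSet) (u : sMap B Z) (v : sMap C Z),
    (forall k (a : A k), u k (g k a) = v k (h k a)) ->
    exists w : sMap D Z,
      ((forall k x, w k (b k x) = u k x) /\ (forall k x, w k (c k x) = v k x)) /\
      forall w' : sMap D Z,
        (forall k x, w' k (b k x) = u k x) -> (forall k x, w' k (c k x) = v k x) ->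
        forall k d, w' k d = w k d.

(* The filtration is indexed by l >= -1; we shift by one: F 0 = F_{-1} T = S and
   F l.+1 = F_l T.  The filtration is either finite (L = Some N: stages
   F_0,...,F_{N-1}, i.e. l < N) or infinite (L = None). *)
Definition in_range (L : option nat) (l : nat) : bool :=
  if L is Some N then l < N else true.
Definition in_range_cl (L : option nat) (l : nat) : bool :=
  if L is Some N then l <= N else true.

Definition expansion (m : nat) (T : sSet) (S : subcx T) : Prop :=
  exists (L : option nat) (F : nat -> subcx T) (n : nat -> nat)
         (i : forall l, 'I_(n l).+1),
    (forall k x, F 0 k x <-> S k x) /\
    (forall k (x : T k), exists l, in_range_cl L l /\ F l k x) /\
    (forall a b, in_range L a -> in_range L b -> a <= b -> n a <= n b) /\
    (forall l, in_range L l -> m <= n l) /\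
    (forall l, in_range L l ->
       exists (Hsub : forall k x, F l k x -> F l.+1 k x)
              (x : sMap (Delta (n l)) (sub (F l.+1)))
              (y : sMap (sub (horn (i l))) (sub (F l))),
         is_pushout y (incl (horn (i l))) (incl_sub Hsub) x).
Arguments expansion m T S : clear implicits.

(* Choose a vertex k0 outside J, which exists since #|J| <= n.  List the subsets
   W of the vertices outside k0 |: J by nondecreasing size, and attach in this
   order the faces spanned by (k0 |: J) :|: W, of dimension #|J| + #|W| >= m.
   In such a face, the facet opposite a vertex j of J lies in S, the facet
   opposite a vertex j of W is the face attached for W :\ j, which comes earlier
   since it is smaller, and the facet opposite k0 is new because every earlier
   W' is at most as large as W and different from it.  So each face is
   attached exactly along its horn at k0, and since it is embedded in Delta^n
   the attaching square is a pushout. *)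

From mathcomp Require Import all_boot all_order.
From Stdlib Require Import Classical ClassicalEpsilon ProofIrrelevance.

Set Implicit Arguments.
Unset Strict Implicit.
Unset Printing Implicit Defensive.

Import Order.TTheory.

Lemma sub_val_inj (X : sSet) (C : subcx X) k (a b : sub C k) :
  proj1_sig a = proj1_sig b -> a = b.
Proof.
move: a b; rewrite /= /sub_ob => -[a pa] [b pb] /= e; subst b.
by rewrite (proof_irrelevance _ pa pb).
Qed.

Section HornAttachment.
Variables (X : sSet) (p : nat) (s : X p) (i : 'I_p.+1) (A B : subcx X).
Hypothesis act_s_inj : forall k (g g' : Dmor k p), act g s = act g' s -> g = g'.
Hypothesis subAB : forall k x, A k x -> B k x.
Hypothesis B_s : B p s.
Hypothesis B_cover : forall k x, B k x -> A k x \/ exists g, x = act g s.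
Hypothesis A_act_s : forall k g, A k (act g s) <-> horn i k g.

Definition attach_cell_fun k (g : Delta p k) : sub B k :=
  exist _ (act g s) (smem_act g B_s).

Lemma attach_cell_nat k l (f : Dmor k l) (g : Delta p l) :
  attach_cell_fun (act f g) = act f (attach_cell_fun g).
Proof. by apply: sub_val_inj; exact: act_comp. Qed.

Definition attach_cell : sMap (Delta p) (sub B) := SMap attach_cell_nat.

Definition attach_boundary_fun k (a : sub (horn i) k) : sub A k :=
  exist _ (act (proj1_sig a) s) (proj2 (A_act_s _) (proj2_sig a)).

Lemma attach_boundary_nat k l (f : Dmor k l) (a : sub (horn i) l) :
  attach_boundary_fun (act f a) = act f (attach_boundary_fun a).
Proof. by apply: sub_val_inj; exact: act_comp. Qed.

Definition attach_boundary : sMap (sub (horn i)) (sub A) := SMap attach_boundary_nat.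

Section Glue.
Variables (Z : sSet) (u : sMap (sub A) Z) (v : sMap (Delta p) Z).
Hypothesis uv_agree :
  forall k (a : sub (horn i) k), u k (attach_boundary k a) = v k (incl (horn i) k a).

Lemma cell_of_notA k (d : sub B k) :
  ~ A k (proj1_sig d) -> exists g, proj1_sig d = act g s.
Proof. by case: (B_cover (proj2_sig d)). Qed.

Definition glue_fun k (d : sub B k) : Z k :=
  match excluded_middle_informative (A k (proj1_sig d)) with
  | left pa => u k (exist _ (proj1_sig d) pa)
  | right na => v k (proj1_sig (constructive_indefinite_description _ (cell_of_notA na)))
  end.

Lemma glue_A k (d : sub B k) (pa : A k (proj1_sig d)) :
  glue_fun d = u k (exist _ (proj1_sig d) pa).
Proof.
rewrite /glue_fun; case: excluded_middle_informative => [pa'|//].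
by rewrite (proof_irrelevance _ pa' pa).
Qed.

Lemma glue_cell k (d : sub B k) g : proj1_sig d = act g s -> glue_fun d = v k g.
Proof.
move=> dE; rewrite /glue_fun; case: excluded_middle_informative => [pa|na].
- have hg : horn i k g by apply/A_act_s; rewrite -dE.
  have := uv_agree (exist _ g hg) => /= <-.
  by congr (u k _); apply: sub_val_inj.
- case: constructive_indefinite_description => g' /= g'E.
  by congr (v k _); apply: act_s_inj; rewrite -dE -g'E.
Qed.

Lemma glue_nat k l (f : Dmor k l) (d : sub B l) :
  glue_fun (act f d) = act f (glue_fun d).
Proof.
have [pa|/cell_of_notA [g dE]] := classic (A l (proj1_sig d)).
  rewrite (glue_A pa) (@glue_A k (act f d) (smem_act f pa)) -smap_nat.
  by congr (u k _); apply: sub_val_inj.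
rewrite (glue_cell dE) (@glue_cell _ _ (Dcomp f g)); first exact: smap_nat.
by rewrite /= dE act_comp.
Qed.

Definition glue : sMap (sub B) Z := SMap glue_nat.

End Glue.

Lemma attach_pushout :
  is_pushout attach_boundary (incl (horn i)) (incl_sub subAB) attach_cell.
Proof.
split=> [k a|Z u v uv]; first exact: sub_val_inj.
exists (glue uv); split; [split|].
- move=> k a /=; rewrite (@glue_A Z u v k (incl_sub subAB k a) (proj2_sig a)).
  by congr (u k _); apply: sub_val_inj.
- by move=> k g; exact: glue_cell.
- move=> w' w'u w'v k d /=.
  have [pa|/cell_of_notA [g dE]] := classic (A k (proj1_sig d)).
    rewrite (glue_A u v pa) -w'u; congr (w' k _); exact: sub_val_inj.
  rewrite (glue_cell uv dE) -w'v; congr (w' k _); exact: sub_val_inj.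
Qed.

End HornAttachment.

Definition vertices k n (f : Dmor k n) : {set 'I_n.+1} := [set sval f v | v : 'I_k.+1].

Lemma in_face_vertices n (j : 'I_n.+1) k (f : Dmor k n) :
  in_face j f <-> j \notin vertices f.
Proof.
split=> [nf|nj v]; first by apply/imsetP => -[v _ jE]; move: (nf v); rewrite jE eqxx.
by apply: contraNneq nj => <-; exact: imset_f.
Qed.

Lemma union_faces_vertices n (J : {set 'I_n.+1}) k (f : Dmor k n) :
  union_faces (fun j => j \in J) k f <-> ~~ (J \subset vertices f).
Proof.
split=> [[j [jJ /in_face_vertices nj]]|/subsetPn [j jJ /in_face_vertices nj]].
  by apply/subsetPn; exists j.
by exists j.
Qed.

Lemma vertices_comp k l n (g : Dmor k l) (f : Dmor l n) :
  vertices (Dcomp g f) = sval f @: vertices g.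
Proof. by rewrite -imset_comp; apply: eq_imset => v; rewrite /= ffunE. Qed.

Lemma vertices_comp_sub k l n (g : Dmor k l) (f : Dmor l n) :
  vertices (Dcomp g f) \subset vertices f.
Proof. by apply/subsetP => _ /imsetP [v _ ->]; rewrite /= ffunE; exact: imset_f. Qed.

Section Span.
Variables (n p : nat) (V : {set 'I_n.+1}).
Hypothesis cardV : #|V| = p.+1.

Definition span_fun : {ffun 'I_p.+1 -> 'I_n.+1} :=
  [ffun v => Order.enum_val (cast_ord (esym cardV) v)].

Lemma span_fun_mono : {mono span_fun : a b / a <= b}.
Proof.
move=> a b; rewrite !ffunE.
exact: (Order.le_enum_val (le_total : total (<=%O : rel 'I_n.+1))).
Qed.

Lemma span_fun_inj : injective span_fun.
Proof. by move=> a b ab; apply/val_inj/anti_leq; rewrite -!span_fun_mono ab leqnn. Qed.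

Lemma span_funP a : span_fun a \in V.
Proof. by rewrite ffunE Order.enum_valP. Qed.

Lemma span_fun_monob : monob span_fun.
Proof.
by apply/forallP => a; apply/forallP => b; apply/implyP; rewrite span_fun_mono.
Qed.

Definition span : Dmor p n := exist _ span_fun span_fun_monob.

Definition span_rank x (xV : x \in V) : 'I_p.+1 :=
  cast_ord cardV (Order.enum_rank_in xV x).

Lemma span_rankK x (xV : x \in V) : span_fun (span_rank xV) = x.
Proof. by rewrite ffunE cast_ordK Order.enum_rankK_in. Qed.

Lemma vertices_span : vertices span = V.
Proof.
apply/setP => x; apply/imsetP/idP => [[a _ ->]|xV]; first exact: span_funP.
by exists (span_rank xV); rewrite ?span_rankK.
Qed.

Lemma span_cancel k (g g' : Dmor k p) : Dcomp g span = Dcomp g' span -> g = g'.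
Proof.
move=> gg'; apply/val_inj/ffunP => v; apply: span_fun_inj.
by have := congr1 (fun h : Dmor k n => sval h v) gg'; rewrite /= !ffunE.
Qed.

Lemma span_factor k (f : Dmor k n) :
  vertices f \subset V -> exists g, f = Dcomp g span.
Proof.
move=> /subsetP fV.
have fvV v : sval f v \in V by apply/fV/imset_f.
pose g := [ffun v => span_rank (fvV v)].
have gE v : span_fun (g v) = sval f v by rewrite [g v]ffunE span_rankK.
have g_mono : monob g.
  apply/forallP => a; apply/forallP => b; apply/implyP => ab.
  by rewrite -span_fun_mono !gE (monobP (svalP f)).
by exists (exist _ g g_mono); apply/val_inj/ffunP => v; rewrite /= ffunE gE.
Qed.

Lemma horn_span i k (g : Dmor k p) :
  horn i k g <-> ~~ (V :\ span_fun i \subset vertices (Dcomp g span)).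
Proof.
rewrite vertices_comp; split=> [[j [ji /in_face_vertices nj]]|/subsetPn [x]].
  apply/subsetPn; exists (span_fun j).
    by rewrite !inE (inj_eq span_fun_inj) span_funP andbT.
  by rewrite (mem_imset _ _ span_fun_inj).
rewrite !inE => /andP [xi xV] nx; exists (span_rank xV); split.
  by apply: contraNneq xi => <-; rewrite span_rankK.
apply/in_face_vertices; apply: contraNN nx => h.
by rewrite -(span_rankK xV); exact: imset_f.
Qed.

End Span.

Section Stages.
Variables (n : nat) (J : {set 'I_n.+1}) (k0 : 'I_n.+1).

Definition extras_seq : seq {set 'I_n.+1} :=
  sort (fun A B : {set 'I_n.+1} => #|A| <= #|B|) (enum (powerset (~: (k0 |: J)))).

Definition stage_count := size extras_seq.
Definition extras l := nth set0 extras_seq l.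
Definition stage l := (k0 |: J) :|: extras l.
Definition stage_dim l := #|J| + #|extras l|.

Lemma extras_sub l : extras l \subset ~: (k0 |: J).
Proof.
rewrite /extras; have [lN|Nl] := ltnP l stage_count; last by rewrite nth_default ?sub0set.
by have := mem_nth set0 lN; rewrite mem_sort mem_enum powersetE.
Qed.

Lemma extras_surj (X : {set 'I_n.+1}) :
  X \subset ~: (k0 |: J) -> exists2 l, l < stage_count & extras l = X.
Proof.
move=> XK; have Xs : X \in extras_seq by rewrite mem_sort mem_enum powersetE.
by exists (index X extras_seq); rewrite ?index_mem // /extras nth_index.
Qed.

Lemma extras_inj a b : a < stage_count -> b < stage_count -> extras a = extras b -> a = b.
Proof.
move=> aN bN ab; apply/eqP; rewrite -(nth_uniq set0 aN bN); first exact/eqP.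
by rewrite /extras_seq sort_uniq enum_uniq.
Qed.

Lemma card_extras_mono a b : a <= b -> b < stage_count -> #|extras a| <= #|extras b|.
Proof.
move=> ab bN.
have card_trans : transitive (fun A B : {set 'I_n.+1} => #|A| <= #|B|).
  by move=> ? ? ?; exact: leq_trans.
have sorted_extras : sorted (fun A B : {set 'I_n.+1} => #|A| <= #|B|) extras_seq.
  by apply: sort_sorted => A B; exact: leq_total.
apply: (sorted_leq_nth card_trans (fun A => leqnn #|A|) set0 sorted_extras) => //.
by rewrite inE (leq_ltn_trans ab).
Qed.

Lemma k0_stage l : k0 \in stage l.
Proof. by rewrite !inE eqxx. Qed.

Lemma stage_cover (U : {set 'I_n.+1}) : exists2 l, l < stage_count & U \subset stage l.
Proof.
have [l lN lE] := @extras_surj (U :\: (k0 |: J)) (subsetDr _ _).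
exists l => //; apply/subsetP => x xU.
by rewrite /stage lE !inE xU andbT orbN.
Qed.

Hypothesis k0J : k0 \notin J.

Lemma card_stage l : #|stage l| = (stage_dim l).+1.
Proof.
have disj : [disjoint k0 |: J & extras l].
  by rewrite disjoint_sym disjoints_subset extras_sub.
by rewrite /stage cardsU (disjoint_setI0 disj) cards0 subn0 cardsU1 k0J add1n.
Qed.

Lemma stage_not_below l l' :
  l < stage_count -> l' < l -> ~~ (stage l :\ k0 \subset stage l').
Proof.
move=> lN l'l; apply/negP => sub.
have sub_extras : extras l \subset extras l'.
  apply/subsetP => y yl; have := subsetP (extras_sub l) y yl.
  rewrite !inE negb_or => /andP [yk0 yJ].
  have := subsetP sub y; rewrite !inE yk0 yl orbT /= => /(_ isT).
  by rewrite (negbTE yk0) (negbTE yJ).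
have /eqP eq_extras : extras l == extras l'.
  by rewrite eqEcard sub_extras (card_extras_mono (ltnW l'l) lN).
have ll' := extras_inj lN (ltn_trans l'l lN) eq_extras.
by rewrite ll' ltnn in l'l.
Qed.

Lemma stage_facet_below l x :
  x \in extras l -> exists2 l', l' < l & stage l :\ x \subset stage l'.
Proof.
move=> xl.
have [l' l'N l'E] :=
  @extras_surj (extras l :\ x) (subset_trans (subD1set _ _) (extras_sub l)).
exists l'.
  rewrite ltnNge; apply/negP => ll'.
  by have := card_extras_mono ll' l'N; rewrite l'E (cardsD1 x) xl add1n ltnn.
apply/subsetP => y; rewrite /stage l'E !inE.
by case/andP => ->.
Qed.

Lemma stage_horn l (U : {set 'I_n.+1}) :
  l < stage_count -> U \subset stage l ->
  (~~ (J \subset U) \/ exists2 l', l' < l & U \subset stage l') <->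
  ~~ (stage l :\ k0 \subset U).
Proof.
move=> lN Ul; split=> [[nJ|[l' l'l Ul']]|/subsetPn [x]].
- apply: contra nJ; apply: subset_trans; apply/subsetP => j jJ.
  by rewrite !inE jJ orbT andbT; apply: contraNneq k0J => <-.
- by apply: contra (stage_not_below lN l'l) => /subset_trans; apply.
rewrite !inE => /andP [xk0]; rewrite (negbTE xk0) /= => /orP [xJ|xl] xU.
  by left; apply/subsetPn; exists x.
have [l' l'l sub] := stage_facet_below xl.
right; exists l' => //; apply: subset_trans sub; apply/subsetP => y yU.
by rewrite in_setD1 (subsetP Ul y yU) andbT; apply: contraNneq xU => <-.
Qed.

End Stages.

Section Filtration.
Variables (n : nat) (J : {set 'I_n.+1}) (k0 : 'I_n.+1).
Hypothesis k0J : k0 \notin J.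

(* [filt l] is the stage F_(l-1) of the filtration: S together with the faces
   spanned by [stage l'] for l' < l. *)
Definition filt_mem l k (f : Dmor k n) : Prop :=
  ~~ (J \subset vertices f) \/ exists2 l', l' < l & vertices f \subset stage J k0 l'.

Lemma filt_mem_act l k k' (g : Dmor k k') (f : Dmor k' n) :
  filt_mem l f -> filt_mem l (Dcomp g f).
Proof.
have sub := vertices_comp_sub g f.
case=> [nJ|[l' l'l fl']]; [left|right; exists l' => //].
  by apply: contra nJ => /subset_trans; apply.
exact: subset_trans sub fl'.
Qed.

Definition filt l : subcx (Delta n) :=
  @Subcx (Delta n) (filt_mem l) (fun k k' g f => @filt_mem_act l k k' g f).

Definition stage_simplex l : Dmor (stage_dim J k0 l) n := span (card_stage k0J l).

Definition stage_apex l : 'I_(stage_dim J k0 l).+1 :=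
  span_rank (card_stage k0J l) (k0_stage J k0 l).

Lemma filt0 k (f : Dmor k n) : filt 0 k f <-> union_faces (fun j => j \in J) k f.
Proof. by rewrite union_faces_vertices; split=> [[//|[]]|]; [|left]. Qed.

Lemma filt_succ_sub l k (f : Dmor k n) : filt l k f -> filt l.+1 k f.
Proof. by case=> [nJ|[l' l'l fl']]; [left|right; exists l'; rewrite // ltnS ltnW]. Qed.

Lemma filt_cover k (f : Dmor k n) : filt (stage_count J k0) k f.
Proof. by have [l lN fl] := stage_cover J k0 (vertices f); right; exists l. Qed.

Lemma filt_stage_simplex l : filt l.+1 _ (stage_simplex l).
Proof. by right; exists l; rewrite // vertices_span. Qed.

Lemma filt_succ l k (f : Dmor k n) :
  filt l.+1 k f -> filt l k f \/ exists g, f = Dcomp g (stage_simplex l).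
Proof.
case=> [nJ|[l' l'l fl']]; first by left; left.
move: l'l; rewrite ltnS leq_eqVlt => /orP [/eqP l'E|l'l].
  by right; apply: span_factor; rewrite -l'E.
by left; right; exists l'.
Qed.

Lemma filt_stage_horn l k (g : Dmor k (stage_dim J k0 l)) :
  l < stage_count J k0 ->
  filt l k (Dcomp g (stage_simplex l)) <-> horn (stage_apex l) k g.
Proof.
move=> lN; rewrite (horn_span (card_stage k0J l)) span_rankK; apply: stage_horn => //.
by have := vertices_comp_sub g (stage_simplex l); rewrite vertices_span.
Qed.

Lemma filt_step_pushout l : l < stage_count J k0 ->
  exists (sub_succ : forall k f, filt l k f -> filt l.+1 k f)
         (x : sMap (Delta (stage_dim J k0 l)) (sub (filt l.+1)))
         (y : sMap (sub (horn (stage_apex l))) (sub (filt l))),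
    is_pushout y (incl (horn (stage_apex l))) (incl_sub sub_succ) x.
Proof.
move=> lN; exists (@filt_succ_sub l); do 2 eexists.
apply: (attach_pushout (X := Delta n) (s := stage_simplex l)).
- exact: span_cancel.
- exact: filt_stage_simplex.
- exact: filt_succ.
- by move=> k g; exact: filt_stage_horn.
Qed.

End Filtration.

Theorem lemma3p8 (m n : nat) (J : {set 'I_n.+1}) :
  0 < m -> m <= n -> #|J| = m ->
  expansion m (Delta n) (union_faces (fun j => j \in J)).
Proof.
move=> _ le_mn cardJ.
have [k0 _ k0J] : exists2 k0, k0 \in [set: 'I_n.+1] & k0 \notin J.
  apply/subsetPn; apply: contraTN le_mn => /subset_leq_card.
  by rewrite cardsT card_ord cardJ -ltnNge.
exists (Some (stage_count J k0)), (filt J k0), (stage_dim J k0), (stage_apex k0J).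
split; [exact: filt0|split; [|split; [|split]]].
- by move=> k f; exists (stage_count J k0); split; [exact: leqnn|exact: filt_cover].
- by move=> a b _ bN ab; rewrite leq_add2l; exact: card_extras_mono.
- by move=> l _; rewrite /stage_dim cardJ leq_addr.
- exact: filt_step_pushout.
Qed.
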